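(* Let $n\ge2$, $d\ge1$, $\mathbf K\in\mathbb R^{n\times d}$ with rows $\mathbf k_i$, $\beta>0$, $\tau>0$, and for a positive integer $s$ let $\mathbf T^s\in\mathbb R^{n\times n}$ be given by $\mathbf T^s_{il}=\sum_{p=0}^s\frac{1}{p!}\big(\tfrac{\beta}{\tau^2}\langle\mathbf k_i,\mathbf k_l\rangle\big)^p$. Then, with $(\sigma,\delta)\defeq\big(\frac{s}{\log n},\frac{d}{\log n}\big)$, $$\mathrm{rank}(\mathbf T^s)\le\frac{1}{\sqrt\pi}\,n^{(\sigma+\delta)\,\mathrm{Ent}\left(\frac{\sigma}{\sigma+\delta}\right)},$$ where $\mathrm{Ent}(p)\defeq-p\log p-(1-p)\log(1-p)$.
   Context: $\log$ is the natural logarithm. *)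

From HB Require Import structures.
From mathcomp Require Import all_boot all_order all_algebra.
From mathcomp Require Import all_classical all_reals all_analysis.
Set Implicit Arguments. Unset Strict Implicit. Unset Printing Implicit Defensive.
Import Order.TTheory GRing.Theory Num.Theory.
Local Open Scope ring_scope.

Definition Ent {R : realType} (p : R) : R :=
  - (p * ln p) - (1 - p) * ln (1 - p).

Definition row_dot {R : realType} (n d : nat) (K : 'M[R]_(n, d)) (i l : 'I_n) : R :=
  \sum_(j < d) K i j * K l j.

Definition Tmat {R : realType} (n d s : nat) (K : 'M[R]_(n, d)) (beta tau : R)
  : 'M[R]_n :=
  \matrix_(i < n, l < n)
    \sum_(p < s.+1) (p`!%:R)^-1 * (beta / tau ^+ 2 * row_dot K i l) ^+ p.

From HB Require Import structures.
From mathcomp Require Import all_boot all_order all_algebra.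
From mathcomp Require Import all_classical all_reals all_analysis.
From mathcomp Require Import zify ring lra.
Import Order.TTheory GRing.Theory Num.Theory.
Set Implicit Arguments. Unset Strict Implicit. Unset Printing Implicit Defensive.

(* Expanding <k_i, k_l>^p puts every row of T^s in the span of the vectors
   l |-> prod_(x in t) K_(l x), for t a multiset of at most s column indices;
   there are C(s + d, s) such multisets.  In the binomial expansion of
   (d + s)^(s + d) the term C(s + d, s) d^d s^s is at most the sum of its two
   neighbours, so 2 C(s + d, s) <= ((s + d)/s)^s ((s + d)/d)^d, and this right
   hand side is exactly n^((sigma + delta) Ent(sigma / (sigma + delta))).
   Finally sqrt pi <= 2. *)

Definition binomial_term (x y N i : nat) := 'C(N, i) * (x ^ (N - i) * y ^ i).

Lemma binomial_term_window_le x y N i : i.+2 <= N ->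
  binomial_term x y N i + binomial_term x y N i.+1 + binomial_term x y N i.+2
    <= (x + y) ^ N.
Proof.
move=> iN; set T := binomial_term x y N.
have -> : T i + T i.+1 + T i.+2 = \sum_(i <= l < i.+3) T l.
  by rewrite /index_iota -addn3 addKn /= !big_cons big_nil addn0 addnA.
have -> : (x + y) ^ N = \sum_(0 <= l < N.+1) T l by rewrite big_mkord expnDn.
rewrite [X in _ <= X](big_cat_nat _ (n := i)); [|by []|by lia].
rewrite [X in _ <= _ + X](big_cat_nat _ (n := i.+3)); [|by lia|by lia].
by apply: leq_trans (leq_addl _ _); exact: leq_addr.
Qed.

Lemma binomial_term_le_neighbours k j : 0 < k -> 0 < j ->
  binomial_term j k (k + j) k
    <= binomial_term j k (k + j) k.-1 + binomial_term j k (k + j) k.+1.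
Proof.
(* The neighbours are j/(j+1) and k/(k+1) times the middle term, both >= 1/2. *)
case: k => [//|a] _; case: j => [//|b] _; set k := a.+1; set j := b.+1.
set N := k + j; rewrite /binomial_term /=.
have binl : k * 'C(N, k) = j.+1 * 'C(N, a).
  by rewrite mul_bin_left; congr (_ * _); rewrite /N /k /j; lia.
have binr : k.+1 * 'C(N, k.+1) = j * 'C(N, k).
  by rewrite mul_bin_left; congr (_ * _); rewrite /N /k /j; lia.
rewrite -(leq_pmul2l (muln_gt0 j.+1 k.+1)).
have -> : N - a = j.+1 by rewrite /N /k /j; lia.
have -> : N - k = j by rewrite /N /k /j; lia.
have -> : N - k.+1 = b by rewrite /N /k /j; lia.
set P := 'C(N, k) * (j ^ j * k ^ k).
have left_term : j.+1 * k.+1 * ('C(N, a) * (j ^ j.+1 * k ^ a)) = k.+1 * j * P.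
  rewrite /P [k ^ k]expnS expnS.
  transitivity (k.+1 * j * j ^ j * k ^ a * (j.+1 * 'C(N, a))); first ring.
  by rewrite -binl; ring.
have right_term : j.+1 * k.+1 * ('C(N, k.+1) * (j ^ b * k ^ k.+1)) = j.+1 * k * P.
  rewrite /P [j ^ j]expnS expnS.
  transitivity (j.+1 * k * j ^ b * k ^ k * (k.+1 * 'C(N, k.+1))); first ring.
  by rewrite binr; ring.
by rewrite mulnDr left_term right_term -mulnDl leq_mul2r; apply/orP; right; nia.
Qed.

Lemma double_bin_expn_le k j : 0 < k -> 0 < j ->
  2 * ('C(k + j, k) * (j ^ j * k ^ k)) <= (k + j) ^ (k + j).
Proof.
move=> k_gt0 j_gt0; have := binomial_term_le_neighbours k_gt0 j_gt0.
case: k k_gt0 => [//|a] _ /=.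
have /(binomial_term_window_le j a.+1) : a.+2 <= a.+1 + j by lia.
have -> : binomial_term j a.+1 (a.+1 + j) a.+1 = 'C(a.+1 + j, a.+1) * (j ^ j * a.+1 ^ a.+1).
  by rewrite /binomial_term addKn.
rewrite [X in _ <= X ^ _]addnC; lia.
Qed.

Lemma sum_binomial_diag s m : \sum_(p < s.+1) 'C(p + m, p) = 'C(s + m.+1, s).
Proof.
elim: s => [|s IHs]; first by rewrite big_ord1 !bin0.
by rewrite big_ord_recr /= IHs !addSn !addnS [RHS]binS addnC.
Qed.

Local Open Scope ring_scope.

Definition sorted_tuples d p := [set t : p.-tuple 'I_d | sorted leq (map val t)].

Lemma sum_card_sorted_tuples d s :
  (\sum_(p < s.+1) #|sorted_tuples d.+1 p| = 'C(s + d.+1, s))%N.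
Proof.
by rewrite -sum_binomial_diag; apply: eq_bigr => p _; rewrite card_sorted_tuples.
Qed.

Section PolynomialGramMatrix.
Variables (R : realType) (n d : nat) (K : 'M[R]_(n, d)).

Definition monomial_row (t : seq 'I_d) : 'rV[R]_n := \row_l \prod_(x <- t) K l x.

Definition monomial_mx p : 'M[R]_(#|sorted_tuples d p|, n) :=
  \matrix_k monomial_row (enum_val k : p.-tuple 'I_d).

Definition poly_gram_mx (c : nat -> R) s : 'M[R]_n :=
  \matrix_(i, l) \sum_(p < s.+1) c p * row_dot K i l ^+ p.

Lemma monomial_row_sub p (t : p.-tuple 'I_d) : (monomial_row t <= monomial_mx p)%MS.
Proof.
pose t_sorted := sort_tuple (relpre val leq) t.
have t_sorted_in : t_sorted \in sorted_tuples d p.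
  by rewrite inE sorted_map sort_sorted // => x y; exact: leq_total.
suff -> : monomial_row t = row (enum_rank_in t_sorted_in t_sorted) (monomial_mx p).
  exact: row_sub.
rewrite rowK enum_rankK_in //; apply/rowP => l; rewrite !mxE.
by apply: perm_big; rewrite perm_sym perm_sort.
Qed.

Lemma row_dot_exp_row i p :
  \row_l row_dot K i l ^+ p =
    \sum_(f : {ffun 'I_p -> 'I_d})
      (\prod_(m < p) K i (f m)) *: monomial_row [tuple f m | m < p].
Proof.
apply/rowP => l; rewrite !mxE summxE /row_dot -[in LHS](card_ord p) -prodr_const.
rewrite bigA_distr_bigA; apply: eq_bigr => f _.
rewrite !mxE big_tuple -big_split /=; apply: eq_bigr => m _.
by rewrite tnth_mktuple.
Qed.

Lemma row_dot_exp_sub i p : (\row_l row_dot K i l ^+ p <= monomial_mx p)%MS.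
Proof.
rewrite row_dot_exp_row; apply: summx_sub => f _; apply: scalemx_sub.
exact: monomial_row_sub.
Qed.

Lemma rank_poly_gram_mx c s :
  (\rank (poly_gram_mx c s) <= \sum_(p < s.+1) #|sorted_tuples d p|)%N.
Proof.
have gram_sub : (poly_gram_mx c s <= \sum_(p < s.+1) <<monomial_mx p>>)%MS.
  apply/row_subP => i.
  have -> : row i (poly_gram_mx c s) = \sum_(p < s.+1) c p *: \row_l row_dot K i l ^+ p.
    by apply/rowP => l; rewrite !mxE summxE; apply: eq_bigr => p _; rewrite !mxE.
  apply: summx_sub => p _; apply: scalemx_sub; apply: (sumsmx_sup p) => //.
  by rewrite genmxE row_dot_exp_sub.
apply: leq_trans (mxrankS gram_sub) _.
apply: leq_trans (mxrank_sum_leqif _) _.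
by apply: leq_sum => p _; rewrite /= genmxE rank_leq_row.
Qed.

End PolynomialGramMatrix.

Lemma Tmat_poly_gram (R : realType) n d s (K : 'M[R]_(n, d)) beta tau :
  Tmat s K beta tau = poly_gram_mx K (fun p => (p`!%:R)^-1 * (beta / tau ^+ 2) ^+ p) s.
Proof.
by apply/matrixP => i l; rewrite !mxE; apply: eq_bigr => p _; rewrite exprMn mulrA.
Qed.

Section EntropyPower.
Variable R : realType.

Lemma mulD_Ent (S D : R) : 0 < S -> 0 < D ->
  (S + D) * Ent (S / (S + D)) = S * ln ((S + D) / S) + D * ln ((S + D) / D).
Proof.
move=> S_gt0 D_gt0; have SD_neq0 : S + D != 0 by rewrite gt_eqF ?addr_gt0.
rewrite /Ent (_ : 1 - S / (S + D) = D / (S + D)); last by field.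
rewrite -[S / _]invf_div -[D / _]invf_div !lnV ?posrE ?divr_gt0 ?addr_gt0 //.
by field; rewrite SD_neq0 !gt_eqF.
Qed.

Lemma Ent_scale (S D L : R) : L != 0 -> S + D != 0 ->
  (S / L + D / L) * Ent (S / L / (S / L + D / L)) = (S + D) * Ent (S / (S + D)) / L.
Proof.
move=> L_neq0 SD_neq0.
rewrite (_ : S / L / (S / L + D / L) = S / (S + D)).
  by field.
by field; rewrite ?L_neq0 ?SD_neq0.
Qed.

Lemma powR_div_ln (x y : R) : 1 < x -> x `^ (y / ln x) = expR y.
Proof.
move=> x_gt1; have x_gt0 : 0 < x by apply: lt_trans x_gt1.
by rewrite -{1}(lnK x_gt0) -expRM mulrC divfK // gt_eqF // ln_gt0.
Qed.

Lemma powR_Ent_nat (x : R) s d : 1 < x -> (0 < s)%N -> (0 < d)%N ->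
  x `^ ((s%:R / ln x + d%:R / ln x) * Ent (s%:R / ln x / (s%:R / ln x + d%:R / ln x)))
    = ((s + d)%:R / s%:R) ^+ s * ((s + d)%:R / d%:R) ^+ d.
Proof.
move=> x_gt1 s_gt0 d_gt0.
have S_gt0 : 0 < s%:R :> R by rewrite ltr0n.
have D_gt0 : 0 < d%:R :> R by rewrite ltr0n.
rewrite Ent_scale ?gt_eqF ?ln_gt0 ?addr_gt0 // powR_div_ln // mulD_Ent // -natrD.
by rewrite expRD !expRM_natl !lnK // posrE divr_gt0 // ltr0n addn_gt0 s_gt0.
Qed.

Lemma double_bin_le_ratio_expr k j : (0 < k)%N -> (0 < j)%N ->
  2 * 'C(k + j, k)%:R <= ((k + j)%:R / k%:R) ^+ k * ((k + j)%:R / j%:R) ^+ j :> R.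
Proof.
move=> k_gt0 j_gt0; have := double_bin_expn_le k_gt0 j_gt0.
rewrite -(ler_nat R) !natrM !natrX => mid_le.
have K_gt0 : 0 < k%:R :> R by rewrite ltr0n.
have J_gt0 : 0 < j%:R :> R by rewrite ltr0n.
rewrite !expr_div_n mulf_div -exprD.
by rewrite ler_pdivlMr ?mulr_gt0 ?exprn_gt0 // -mulrA [k%:R ^+ k * _]mulrC.
Qed.

End EntropyPower.

Lemma sqrt_pi_le2 (R : realType) : Num.sqrt (pi : R) <= 2.
Proof.
rewrite -[X in _ <= X](ger0_norm (ler0n R 2)) -sqrtr_sqr ler_sqrt ?exprn_ge0 //.
have := @pihalf_lt2 R; rewrite expr2; lra.
Qed.

Unset Implicit Arguments.

Theorem lemma4 (R : realType) (n d s : nat) (K : 'M[R]_(n, d)) (beta tau : R) :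
  (2 <= n)%N -> (1 <= d)%N -> (0 < s)%N -> 0 < beta -> 0 < tau ->
  let sigma := s%:R / ln (n%:R : R) in
  let delta := d%:R / ln (n%:R : R) in
  (\rank (Tmat s K beta tau))%:R
    <= (Num.sqrt pi)^-1 *
       (n%:R : R) `^ ((sigma + delta) * Ent (sigma / (sigma + delta))).
Proof.
move=> n_ge2 d_gt0 s_gt0 _ _; cbv zeta.
case: d K d_gt0 => [//|d] K _.
rewrite powR_Ent_nat ?ltr1n //.
have rank_le : (\rank (Tmat s K beta tau) <= 'C(s + d.+1, s))%N.
  by rewrite Tmat_poly_gram -sum_card_sorted_tuples rank_poly_gram_mx.
have binomial_le := double_bin_le_ratio_expr R s_gt0 (ltn0Sn d).
have sqrt_pi_gt0 : 0 < Num.sqrt (pi : R) by rewrite sqrtr_gt0 pi_gt0.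
rewrite mulrC ler_pdivlMr //; apply: le_trans binomial_le.
rewrite mulrC ler_pM ?ler0n ?sqrtr_ge0 ?sqrt_pi_le2 //.
by rewrite ler_nat.
Qed.
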